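(* Let $G$ be a graph, $R$ a connected subset of $V(G)$, $v_0\in V(G)$, and $P$ a shortest path from $v_0$ to $R$. Then the number of milestones of $P$ is at most $|R|^2+1$.
   Context: $G$ is an unweighted undirected graph with shortest-path distance $\mathrm{dist}$; $R$ is connected if $G[R]$ is connected. A shortest path from $v_0$ to $R$ is a path of length $\min_{y\in R}\mathrm{dist}(v_0,y)$ from $v_0$ to a vertex of $R$; let $x$ be its unique vertex in $R$. Order $V(P)$ by $v\le_P u$ iff $u$ lies on the subpath of $P$ from $v$ to $x$. For $z\in V(G)$, the distance profile $\operatorname{prof}_{R,x}[z]\colon R\to\mathbb{Z}$ is $\operatorname{prof}_{R,x}[z](s)=\mathrm{dist}(z,s)-\mathrm{dist}(z,x)$. A vertex $v\in V(P)$ is a milestone of $P$ if $v=x$ or $\operatorname{prof}_{R,x}[v]\ne\operatorname{prof}_{R,x}[u]$ where $u$ is the successor of $v$ in $\le_P$. *)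

From mathcomp Require Import all_boot all_order all_algebra.
Set Implicit Arguments. Unset Strict Implicit. Unset Printing Implicit Defensive.
Import GRing.Theory Num.Theory.

(* A walk from x is a sequence p with path e x p; it goes from x to last x p
   and has length size p. *)

Section Graph.
Variables (T : finType) (e : rel T).

Definition reach_le (k : nat) (x y : T) : bool :=
  [exists k' : 'I_k.+1, [exists p : k'.-tuple T, path e x p && (last x p == y)]].

(* A shortest walk has length < #|T|; if y is unreachable the value is #|T|
   (a placeholder for infinity, never used in the theorem, where all relevant
   distances are finite). *)
Definition dist (x y : T) : nat := find (fun k => reach_le k x y) (iota 0 #|T|).

Definition connected_set (R : {set T}) : Prop :=
  forall a b, a \in R -> b \in R ->
    connect [rel u v | [&& e u v, u \in R & v \in R]] a b.

Definition shortest_path_to (R : {set T}) (v0 : T) (p : seq T) : Prop :=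
  [/\ path e v0 p, last v0 p \in R &
      forall q : seq T, path e v0 q -> last v0 q \in R -> size p <= size q].

Definition prof (R : {set T}) (x z : T) (s : T) : int :=
  (dist z s)%:Z - (dist z x)%:Z.

Definition prof_neq (R : {set T}) (x z u : T) : bool :=
  [exists s in R, prof R x z s != prof R x u s].

(* Milestones of the path P = v0 :: p with endpoint x = last v0 p.
   The successor of v in <=_P is the next vertex of P after v (towards x). *)
Definition milestones (R : {set T}) (v0 : T) (p : seq T) : {set T} :=
  let P := v0 :: p in
  let x := last v0 p in
  [set v in P | (v == x) || prof_neq R x v (nth v P (index v P).+1)].

End Graph.

From mathcomp Require Import all_boot all_order all_algebra.
From mathcomp Require Import zify.
Set Implicit Arguments. Unset Strict Implicit. Unset Printing Implicit Defensive.

(* Walking one edge along a shortest path P towards its endpoint x lowers the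
   distance to x by exactly one and any other distance by at most one, so the
   profile prof_{R,x}[v] can only grow pointwise as v moves towards x.  Hence
   the total weight sum_{s in R} prof_{R,x}[v](s), which is nonnegative because
   P is a shortest path to R, strictly increases at every milestone other than
   x.  At x itself it is sum_{s in R} dist(x, s) <= |R|^2, since G[R] is
   connected.  So there are at most |R|^2 milestones besides x. *)

Section Distance.
Variables (T : finType) (e : rel T).
Implicit Types (a b c : T) (q : seq T).

Lemma dist_le_card a b : dist e a b <= #|T|.
Proof.
by rewrite /dist -[leqRHS](size_iota 0); apply: find_size.
Qed.

Lemma dist_le_size a q : path e a q -> dist e a (last a q) <= size q.
Proof.
move=> pq; have [Tq|] := ltnP (size q) #|T|; last exact: leq_trans (dist_le_card _ _).
have reach_q : reach_le e (size q) a (last a q).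
  apply/existsP; exists (Ordinal (ltnSn (size q))); apply/existsP.
  by exists (in_tuple q); rewrite /= pq eqxx.
rewrite leqNgt; apply/negP => /(before_find 0).
by rewrite nth_iota // add0n reach_q.
Qed.

Lemma dist_path a b : dist e a b < #|T| ->
  exists2 q, path e a q & last a q = b /\ size q = dist e a b.
Proof.
move=> ab_lt.
have reach_ab : has (fun k => reach_le e k a b) (iota 0 #|T|).
  by rewrite has_find size_iota.
move: (nth_find 0 reach_ab); rewrite -/(dist e a b) nth_iota // add0n.
case/existsP=> k /existsP[q /andP[pq /eqP qb]].
have q_le : size q <= dist e a b by rewrite size_tuple -ltnS.
exists (val q) => //; split=> //; apply/eqP; rewrite eqn_leq q_le /=.
by rewrite -{1}qb dist_le_size.
Qed.

Lemma dist_ge a b k : k <= #|T| ->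
  (forall q, path e a q -> last a q = b -> k <= size q) -> k <= dist e a b.
Proof.
move=> kT walks_ge; have [ab_lt|] := ltnP (dist e a b) #|T|; last exact: leq_trans.
by have [q pq [qb <-]] := dist_path ab_lt; apply: walks_ge.
Qed.

Lemma dist_lt_card_path a q : path e a q -> dist e a (last a q) < #|a :: q|.
Proof.
case/shortenP=> q' pq' uq' sub_q'; apply: leq_ltn_trans (dist_le_size pq') _.
rewrite -[(size q').+1]/(size (a :: q')) -(card_uniqP uq').
apply/subset_leq_card/subsetP=> y; rewrite !inE => /predU1P[-> | /sub_q' ->].
  by rewrite eqxx.
by rewrite orbT.
Qed.

Lemma dist_triangle a b c : dist e a c <= dist e a b + dist e b c.
Proof.
have [ab_lt|] := ltnP (dist e a b) #|T|; last first.
  by move/(leq_trans (dist_le_card a c))/leq_trans; apply; apply: leq_addr.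
have [bc_lt|] := ltnP (dist e b c) #|T|; last first.
  by move/(leq_trans (dist_le_card a c))/leq_trans; apply; apply: leq_addl.
have [q1 pq1 [q1b <-]] := dist_path ab_lt.
have [q2 pq2 [q2c <-]] := dist_path bc_lt.
have pq : path e a (q1 ++ q2) by rewrite cat_path pq1 q1b.
by move: (dist_le_size pq); rewrite last_cat q1b q2c size_cat.
Qed.

Lemma dist_edge a b c : e a b -> dist e a c <= (dist e b c).+1.
Proof.
move=> ab; apply: leq_trans (dist_triangle a b c) _; rewrite -add1n leq_add2r.
by have := @dist_le_size a [:: b]; rewrite /= ab; apply.
Qed.

Lemma dist_connected_set_lt (R : {set T}) a b :
  connected_set e R -> a \in R -> b \in R -> dist e a b < #|R|.
Proof.
move=> connR aR bR; have /connectP[q pRq ->] := connR a b aR bR.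
have qR : {subset q <= R}.
  elim: q a aR pRq => //= z q IHq u _ /andP[/and3P[_ _ zR] pRq] y.
  by rewrite inE => /predU1P[-> // | /(IHq z zR pRq)].
have pq : path e a q by apply: sub_path pRq => u v /and3P[].
apply: leq_trans (dist_lt_card_path pq) (subset_leq_card _); apply/subsetP=> y.
by rewrite inE => /predU1P[-> // | /qR].
Qed.

End Distance.

Lemma last_take_nth (S : Type) (x : S) s i : i <= size s ->
  last x (take i s) = nth x (x :: s) i.
Proof.
by move=> le_is; rewrite (last_nth x) size_takel //; case: i le_is => //= i; rewrite nth_take.
Qed.

Lemma count_strict_steps (f : nat -> nat) (Q : pred nat) n :
  (forall i, i < n -> f i <= f i.+1) ->
  (forall i, i < n -> Q i -> f i < f i.+1) ->
  count Q (iota 0 n) + f 0 <= f n.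
Proof.
elim: n => [|n IHn] // f_mono f_strict.
rewrite -addn1 iotaD count_cat /= addn0 add0n addn1.
have := IHn (fun i lt_in => f_mono i (ltnW lt_in)) (fun i lt_in => f_strict i (ltnW lt_in)).
have := f_mono n (ltnSn n); have := f_strict n (ltnSn n).
by case: (Q n) => [/(_ isT)|_]; lia.
Qed.

Section ShortestPath.
Variables (T : finType) (e : rel T) (R : {set T}) (v0 : T) (p : seq T).
Hypothesis p_shortest : shortest_path_to e R v0 p.

Local Notation P i := (nth v0 (v0 :: p) i).

Lemma shortest_path_suffix i :
  i <= size p -> path e (P i) (drop i p) /\ last (P i) (drop i p) = last v0 p.
Proof.
case: p_shortest => pp _ _ le_ip; rewrite -last_take_nth //.
move: pp; rewrite -{1}(cat_take_drop i p) cat_path => /andP[_ pd].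
by rewrite -last_cat cat_take_drop.
Qed.

Lemma shortest_path_suffix_min i q : i <= size p ->
  path e (P i) q -> last (P i) q \in R -> size p <= i + size q.
Proof.
case: p_shortest => pp _ p_min le_ip pq qR.
move: (p_min (take i p ++ q)); rewrite size_cat size_takel // last_cat.
rewrite last_take_nth // cat_path last_take_nth // pq andbT; apply=> //.
by move: pp; rewrite -{1}(cat_take_drop i p) cat_path => /andP[].
Qed.

Lemma shortest_path_size_lt_card : size p < #|T|.
Proof.
case: p_shortest => pp xR p_min.
have dx_lt : dist e v0 (last v0 p) < #|T|.
  exact: leq_trans (dist_lt_card_path pp) (max_card _).
have [q pq [qx size_q]] := dist_path dx_lt.
by rewrite -size_q in dx_lt; apply: leq_ltn_trans (p_min q pq _) dx_lt; rewrite qx.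
Qed.

Lemma dist_nth_ge i s : i <= size p -> s \in R -> size p - i <= dist e (P i) s.
Proof.
move=> le_ip sR; apply: dist_ge.
  exact: leq_trans (leq_subr _ _) (ltnW shortest_path_size_lt_card).
move=> q pq qs; have := shortest_path_suffix_min le_ip pq; rewrite qs => /(_ sR).
by rewrite leq_subLR.
Qed.

Lemma dist_nth_last i : i <= size p -> dist e (P i) (last v0 p) = size p - i.
Proof.
case: p_shortest => _ xR _ le_ip; apply/eqP; rewrite eqn_leq dist_nth_ge // andbT.
have [pd <-] := shortest_path_suffix le_ip.
by rewrite -size_drop; apply: dist_le_size.
Qed.

End ShortestPath.

(* For z closer to R than x is, [prof_sum] is the sum of the (then nonnegative)
   values of prof_{R,x}[z]. *)
Definition prof_sum (T : finType) (e : rel T) (R : {set T}) (x z : T) : nat :=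
  \sum_(s in R) (dist e z s - dist e z x).

Section ProfileSum.
Variables (T : finType) (e : rel T) (R : {set T}) (x : T).

Lemma prof_sum_edge_le u v : e u v -> dist e u x = (dist e v x).+1 ->
  prof_sum e R x u <= prof_sum e R x v.
Proof.
move=> uv dux; apply: leq_sum => s _.
by have := dist_edge x uv; have := dist_edge s uv; lia.
Qed.

Lemma prof_sum_edge_lt u v : e u v -> dist e u x = (dist e v x).+1 ->
  {in R, forall s, dist e u x <= dist e u s} -> prof_neq e R x u v ->
  prof_sum e R x u < prof_sum e R x v.
Proof.
move=> uv dux u_closest /existsP[s /andP[sR]]; rewrite /prof => /eqP neq_s.
rewrite /prof_sum (bigD1 s sR) [ltnRHS](bigD1 s sR) /= -addSn leq_add //.
  by have := dist_edge s uv; have := u_closest s sR; lia.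
by apply: leq_sum => t _; have := dist_edge t uv; lia.
Qed.

Lemma prof_sum_self_le : connected_set e R -> x \in R ->
  prof_sum e R x x <= #|R| * #|R|.
Proof.
move=> connR xR; rewrite -sum_nat_const leq_sum // => s sR.
exact: leq_trans (leq_subr _ _) (ltnW (dist_connected_set_lt connR xR sR)).
Qed.

End ProfileSum.

Lemma card_milestones_le (T : finType) (e : rel T) (R : {set T}) v0 p :
  #|milestones e R v0 p| <=
  (count (fun i => prof_neq e R (last v0 p) (nth v0 (v0 :: p) i) (nth v0 (v0 :: p) i.+1))
         (iota 0 (size p))).+1.
Proof.
set Q := fun i => _; set P := v0 :: p.
have sub : milestones e R v0 p \subset
            last v0 p :: [seq nth v0 P i | i <- iota 0 (size p) & Q i].
  apply/subsetP=> v; rewrite inE => /andP[vP /predU1P[-> | neq_v]]; first exact: mem_head.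
  have v_idx : nth v0 P (index v P) = v by rewrite nth_index.
  have [lt_vp|] := ltnP (index v P) (size p).
    have lt_vP : (index v P).+1 < size P by rewrite /= ltnS.
    rewrite (set_nth_default v0 _ lt_vP) in neq_v.
    rewrite inE; apply/orP; right; apply/mapP; exists (index v P) => //.
    by rewrite mem_filter mem_iota add0n lt_vp /Q -/P v_idx neq_v.
  (* The last vertex of P is its own successor in the junk value of [nth]. *)
  move=> ge_vp; rewrite nth_default in neq_v; last exact: ge_vp.
  by case/existsP: neq_v => s /andP[_ /eqP].
apply: leq_trans (subset_leq_card sub) _; apply: leq_trans (card_size _) _.
by rewrite /= size_map size_filter.
Qed.

Theorem lemma3p2 (T : finType) (e : rel T)
  (e_sym : symmetric e) (e_irr : irreflexive e)
  (R : {set T}) (v0 : T) (p : seq T) :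
  connected_set e R ->
  shortest_path_to e R v0 p ->
  #|milestones e R v0 p| <= #|R| ^ 2 + 1.
Proof.
move=> connR p_shortest; have [pp xR _] := p_shortest.
set x := last v0 p; set n := size p; pose P i := nth v0 (v0 :: p) i.
pose f i := prof_sum e R x (P i).
have edge i : i < n -> e (P i) (P i.+1) by move=> lt_in; apply: (pathP v0 pp).
have dist_step i : i < n -> dist e (P i) x = (dist e (P i.+1) x).+1.
  by move=> lt_in; rewrite !(dist_nth_last p_shortest) //; lia.
have closest i : i < n -> {in R, forall s, dist e (P i) x <= dist e (P i) s}.
  move=> /ltnW le_in s sR.
  by rewrite (dist_nth_last p_shortest le_in) (dist_nth_ge p_shortest le_in).
have steps := @count_strict_steps f _ n
  (fun i lt_in => prof_sum_edge_le R (edge i lt_in) (dist_step i lt_in))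
  (fun i lt_in => prof_sum_edge_lt (edge i lt_in) (dist_step i lt_in) (closest i lt_in)).
have f_last : f n = prof_sum e R x x by rewrite /f /P /x (last_nth v0).
apply: leq_trans (card_milestones_le e R v0 p) _; rewrite addn1 ltnS -mulnn.
apply: leq_trans (prof_sum_self_le connR xR); rewrite -f_last.
exact: leq_trans (leq_addr _ _) steps.
Qed.
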